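(* Let $T>0$, $0<\eta<T$, $0<\alpha <\frac{2T}{\eta ^{2}}$ and $0\leq\beta < \frac{2T-\alpha \eta ^{2}}{\alpha \eta ^{2}-2\eta +2T}$. If $y\in C([0,T],[0,\infty))$, then the unique solution $u$ of \[ u''(t)+y(t)=0,\ t\in(0,T),\qquad u(0)=\beta u(\eta),\quad u(T)=\alpha\int_0^\eta u(s)\,ds \] satisfies \[ \min_{t\in [\eta,T]}u(t)\geq \gamma \|u\|,\qquad \|u\|=\max_{t\in[0,T]}|u(t)|, \] where \[ \gamma:=\min\left\{\frac{\eta}{T}, \frac{\alpha(\beta+1)\eta^{2}}{2T}, \frac{\alpha(\beta+1)\eta(T-\eta)}{2T-\alpha(\beta+1)\eta^{2}}\right\}\in(0,1). \]
   Context: A solution is a function $u\in C^2([0,T])$ satisfying the differential equation on $(0,T)$ and the two boundary conditions; under the stated hypotheses this problem has a unique solution. *)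

From Stdlib Require Import Reals.
From Coquelicot Require Import Coquelicot.
Open Scope R_scope.

Definition cont_on (a b : R) (f : R -> R) : Prop :=
  forall t, a <= t <= b ->
    filterlim f (within (fun x => a <= x <= b) (locally t)) (locally (f t)).

(* u ∈ C^2([a,b]) with u' = u1, u'' = u2: u is twice differentiable on (a,b)
   and u, u', u'' extend continuously to [a,b]
   (equivalently, one-sided derivatives exist at the endpoints). *)
Definition C2_on (a b : R) (u u1 u2 : R -> R) : Prop :=
  (forall t, a < t < b -> is_derive u t (u1 t) /\ is_derive u1 t (u2 t)) /\
  cont_on a b u /\ cont_on a b u1 /\ cont_on a b u2.

Definition gamma (T eta alpha beta : R) : R :=
  Rmin (eta / T)
    (Rmin (alpha * (beta + 1) * eta ^ 2 / (2 * T))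
          (alpha * (beta + 1) * eta * (T - eta) / (2 * T - alpha * (beta + 1) * eta ^ 2))).

(* The differential equation makes [u] concave on [[0,T]], so [u] lies above
   its chords and below the extensions of its chords.  Concavity on [[0,eta]]
   bounds the integral in the boundary condition from below by the trapezoid
   [eta (u 0 + u eta) / 2 = eta (beta + 1) u eta / 2], whence
   [u T >= m u eta] with [m = alpha (beta + 1) eta / 2]; the chord through
   [0, eta, T] together with the bound on [beta] then forces [u eta >= 0], and
   concavity gives [u >= 0].  Finally [u] is at least [min (u eta) (u T)] on
   [[eta,T]], while every value of [u] is at most [T u eta / eta] (right of
   [eta]) or controlled by the chord through [eta] and [T] (left of [eta]). *)
From Stdlib Require Import Reals Lra Psatz.
From Coquelicot Require Import Coquelicot.
Open Scope R_scope.

Lemma MVT_is_derive (f df : R -> R) (a b : R) : a < b ->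
  (forall x, a < x < b -> is_derive f x (df x)) ->
  (forall x, a <= x <= b -> continuity_pt f x) ->
  exists c, a < c < b /\ f b - f a = df c * (b - a).
Proof.
  intros Hab Hd Hc.
  pose (pr1 := fun c (P : a < c < b) =>
     exist (fun l => derivable_pt_lim f c l) (df c)
       (proj1 (is_derive_Reals f c (df c)) (Hd c P))).
  pose (pr2 := fun c (_ : a < c < b) => derivable_pt_id c).
  destruct (MVT f id a b pr1 pr2 Hab Hc (fun c _ => continuity_pt_id c)) as [c [Hc' E]].
  exists c; split; [exact Hc'|].
  unfold pr1, pr2 in E; rewrite derive_pt_id in E; simpl in E; unfold id in E; lra.
Qed.

Lemma cont_on_sub (a b a' b' : R) (f : R -> R) :
  a <= a' -> b' <= b -> cont_on a b f -> cont_on a' b' f.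
Proof.
  intros Ha Hb Hf t Ht P HP.
  specialize (Hf t ltac:(lra) P HP); unfold filtermap, within in *.
  eapply filter_imp; [|exact Hf].
  intros x Hx Hx'; apply Hx; lra.
Qed.

(* [f (clamp a b x)] extends [f] continuously to all of [R], so that the
   two-sided continuity hypotheses of the MVT and of [ex_RInt_continuous] hold
   at the endpoints. *)
Definition clamp (a b x : R) : R := Rmax a (Rmin b x).

Lemma clamp_in (a b x : R) : a <= b -> a <= clamp a b x <= b.
Proof. intros; unfold clamp, Rmax, Rmin; repeat destruct Rle_dec; lra. Qed.

Lemma clamp_id (a b x : R) : a <= x <= b -> clamp a b x = x.
Proof. intros; unfold clamp, Rmax, Rmin; repeat destruct Rle_dec; lra. Qed.

Lemma clamp_lipschitz (a b x y : R) : Rabs (clamp a b y - clamp a b x) <= Rabs (y - x).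
Proof.
  unfold clamp, Rmax, Rmin; repeat destruct Rle_dec;
  unfold Rabs; repeat destruct Rcase_abs; lra.
Qed.

Lemma continuous_clamp (a b : R) (f : R -> R) (x : R) : a <= b -> cont_on a b f ->
  continuous (fun z => f (clamp a b z)) x.
Proof.
  intros Hab Hf; unfold continuous.
  eapply filterlim_comp; [|apply Hf, clamp_in, Hab].
  intros P [eps HP]; exists eps; intros z Hz.
  apply HP; [|apply clamp_in, Hab].
  exact (Rle_lt_trans _ _ _ (clamp_lipschitz a b x z) Hz).
Qed.

Lemma is_derive_clamp (a b : R) (f : R -> R) (x l : R) : a < x < b ->
  is_derive f x l -> is_derive (fun z => f (clamp a b z)) x l.
Proof.
  intros Hx Hd; eapply is_derive_ext_loc; [|exact Hd].
  assert (Hr : 0 < Rmin (x - a) (b - x)) by (apply Rmin_pos; lra).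
  exists (mkposreal _ Hr); intros z Hz.
  change (Rabs (z - x) < Rmin (x - a) (b - x)) in Hz.
  pose proof (Rmin_l (x - a) (b - x)); pose proof (Rmin_r (x - a) (b - x)).
  apply Rabs_def2 in Hz.
  rewrite clamp_id; [reflexivity|lra].
Qed.

Definition chord_concave (a b : R) (f : R -> R) : Prop :=
  forall x z w, a <= x -> x < z -> z < w -> w <= b ->
    (w - z) * f x + (z - x) * f w <= (w - x) * f z.

Lemma chord_concave_sub (a b a' b' : R) (f : R -> R) :
  a <= a' -> b' <= b -> chord_concave a b f -> chord_concave a' b' f.
Proof. intros Ha Hb Hf x z w Hx Hxz Hzw Hw; apply Hf; lra. Qed.

Lemma chord_concave_ge_min (a b : R) (f : R -> R) (v x z w : R) :
  chord_concave a b f -> a <= x -> x <= z -> z <= w -> w <= b ->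
  v <= f x -> v <= f w -> v <= f z.
Proof.
  intros Hf Hx Hxz Hzw Hw Hvx Hvw.
  destruct (Req_dec z x) as [->|Hzx]; [exact Hvx|].
  destruct (Req_dec z w) as [->|Hzw']; [exact Hvw|].
  pose proof (Hf x z w Hx ltac:(lra) ltac:(lra) Hw); nra.
Qed.

Lemma concave_of_derive2_nonpos (a b : R) (f f1 f2 : R -> R) : a < b ->
  (forall t, a < t < b -> is_derive f t (f1 t) /\ is_derive f1 t (f2 t)) ->
  (forall t, a < t < b -> f2 t <= 0) ->
  cont_on a b f -> chord_concave a b f.
Proof.
  intros Hab Hd Hf2 Hf x z w Hx Hxz Hzw Hw.
  set (F := fun t => f (clamp a b t)).
  assert (HFc : forall p, continuity_pt F p).
  { intro p; apply continuity_pt_filterlim, continuous_clamp; [lra|exact Hf]. }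
  assert (HFd : forall p, a < p < b -> is_derive F p (f1 p)).
  { intros p Hp; apply is_derive_clamp, Hd; exact Hp. }
  destruct (MVT_is_derive F f1 x z Hxz) as [c1 [Hc1 E1]];
    [intros p Hp; apply HFd; lra|intros; apply HFc|].
  destruct (MVT_is_derive F f1 z w Hzw) as [c2 [Hc2 E2]];
    [intros p Hp; apply HFd; lra|intros; apply HFc|].
  destruct (MVT_is_derive f1 f2 c1 c2) as [c [Hc E3]]; [lra|intros p Hp; apply Hd; lra|..].
  { intros p Hp; apply derivable_continuous_pt; exists (f2 p).
    apply is_derive_Reals, Hd; lra. }
  unfold F in E1, E2; rewrite !clamp_id in E1, E2 by lra.
  assert (Hslope : f1 c2 <= f1 c1) by (pose proof (Hf2 c ltac:(lra)); nra).
  assert (0 <= (w - z) * (z - x) * (f1 c1 - f1 c2))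
    by (apply Rmult_le_pos; [apply Rmult_le_pos|]; lra).
  nra.
Qed.

Lemma trapezoid_le_RInt (a b : R) (f : R -> R) : a < b ->
  chord_concave a b f -> cont_on a b f ->
  (b - a) * (f a + f b) / 2 <= RInt f a b.
Proof.
  intros Hab Hconc Hf.
  set (L := fun x => f a + (f b - f a) * (x - a) / (b - a)).
  set (P := fun x => f a * x + (f b - f a) * ((x - a) * (x - a)) / (2 * (b - a))).
  assert (HL : is_RInt L a b ((b - a) * (f a + f b) / 2)).
  { replace ((b - a) * (f a + f b) / 2) with (minus (P b) (P a))
      by (unfold P, minus, plus, opp; simpl; field; lra).
    apply (is_RInt_derive (V := R_CompleteNormedModule) P L).
    - intros x _; unfold P, L; auto_derive; [exact I|field; lra].
    - intros x _; unfold L; apply continuity_pt_filterlim, derivable_continuous_pt; exists ((f b - f a) / (b - a)).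
      apply is_derive_Reals; unfold L; auto_derive; [exact I|field; lra]. }
  rewrite <- (is_RInt_unique (V := R_CompleteNormedModule) _ _ _ _ HL).
  rewrite (RInt_ext f (fun z => f (clamp a b z))).
  2:{ intros x Hx; rewrite Rmin_left, Rmax_right in Hx by lra.
      rewrite clamp_id; [reflexivity|lra]. }
  apply RInt_le; [lra|eexists; exact HL|..].
  - apply (ex_RInt_continuous (V := R_CompleteNormedModule)).
    intros z _; apply continuous_clamp; [lra|exact Hf].
  - intros x Hx; rewrite clamp_id by lra.
    pose proof (Hconc a x b ltac:(lra) ltac:(lra) ltac:(lra) ltac:(lra)).
    apply (Rmult_le_reg_r (b - a)); [lra|].
    replace (L x * (b - a)) with ((b - x) * f a + (x - a) * f b) by (unfold L; field; lra).
    lra.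
Qed.

(* Positivity and the three constraints on [g] are exactly the three terms of
   [gamma], with [m * eta] standing for [alpha (beta + 1) eta^2 / 2]. *)
Lemma concave_min_ge (f : R -> R) (T eta m g : R) :
  0 < eta < T -> chord_concave 0 T f ->
  0 <= f 0 -> 0 <= f eta -> m * f eta <= f T ->
  0 <= g -> g * T <= eta -> g * T <= m * eta -> g * (T - m * eta) <= m * (T - eta) ->
  forall s t, 0 <= s <= T -> eta <= t <= T -> g * f s <= f t.
Proof.
  intros Heta Hf Hf0 Hfe HfT Hg G1 G2 G3 s t Hs Ht.
  assert (Hg1 : g <= 1) by nra.
  assert (Hgm : g <= m) by nra.
  enough (Hbound : g * f s <= f eta /\ g * f s <= f T).
  { destruct Hbound; apply (chord_concave_ge_min 0 T f _ eta t T); [exact Hf|lra..]. }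
  destruct (Rle_or_lt eta s) as [Hse|Hse].
  - assert (eta * f s <= T * f eta).
    { destruct (Req_dec s eta) as [->|Hne]; [nra|].
      pose proof (Hf 0 eta s ltac:(lra) ltac:(lra) ltac:(lra) ltac:(lra)); nra. }
    split; nra.
  - pose proof (Hf s eta T ltac:(lra) Hse ltac:(lra) ltac:(lra)).
    destruct (Rle_or_lt (f eta) (f T)).
    + assert (f s <= f eta) by nra; split; nra.
    + assert ((T - eta) * f s <= (T - m * eta) * f eta) by nra.
      split; nra.
Qed.

Lemma gamma_spec (T eta alpha beta : R) :
  0 < eta < T -> 0 < alpha -> 0 <= beta ->
  alpha * (beta + 1) * eta / 2 * eta < T ->
  let g := gamma T eta alpha beta in
  let m := alpha * (beta + 1) * eta / 2 in
  0 < g /\ g * T <= eta /\ g * T <= m * eta /\ g * (T - m * eta) <= m * (T - eta).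
Proof.
  intros Heta Ha Hb HmT g m; fold m in HmT.
  assert (Hm : 0 < m) by (unfold m; apply Rmult_lt_0_compat; [|lra];
                          apply Rmult_lt_0_compat; [|lra]; apply Rmult_lt_0_compat; lra).
  assert (E2 : alpha * (beta + 1) * eta ^ 2 / (2 * T) = m * eta / T)
    by (unfold m; field; lra).
  assert (E3 : alpha * (beta + 1) * eta * (T - eta) / (2 * T - alpha * (beta + 1) * eta ^ 2)
               = m * (T - eta) / (T - m * eta)) by (unfold m in *; field; lra).
  assert (G1 : g <= eta / T) by apply Rmin_l.
  assert (G2 : g <= m * eta / T)
    by (rewrite <- E2; eapply Rle_trans; [apply Rmin_r|apply Rmin_l]).
  assert (G3 : g <= m * (T - eta) / (T - m * eta))
    by (rewrite <- E3; eapply Rle_trans; [apply Rmin_r|apply Rmin_r]).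
  assert (Gp : 0 < g).
  { unfold g, gamma; rewrite E2, E3; repeat apply Rmin_pos;
      apply Rdiv_lt_0_compat; try apply Rmult_lt_0_compat; lra. }
  repeat split; [exact Gp|..].
  - apply (Rmult_le_compat_r T) in G1; [|lra]; unfold Rdiv in G1; field_simplify in G1; lra.
  - apply (Rmult_le_compat_r T) in G2; [|lra]; unfold Rdiv in G2; field_simplify in G2; lra.
  - apply (Rmult_le_compat_r (T - m * eta)) in G3; [|lra].
    unfold Rdiv in G3; field_simplify in G3; lra.
Qed.

Lemma beta_bound (T eta alpha beta : R) :
  0 < eta < T -> 0 < alpha -> alpha < 2 * T / eta ^ 2 ->
  beta < (2 * T - alpha * eta ^ 2) / (alpha * eta ^ 2 - 2 * eta + 2 * T) ->
  (T - eta) * beta + alpha * (beta + 1) * eta / 2 * eta < T.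
Proof.
  intros Heta Ha Ha2 Hb.
  assert (Hae : alpha * eta ^ 2 < 2 * T).
  { apply (Rmult_lt_compat_r (eta ^ 2)) in Ha2; [|nra].
    replace (2 * T / eta ^ 2 * eta ^ 2) with (2 * T) in Ha2 by (field; lra); lra. }
  assert (HD : 0 < alpha * eta ^ 2 - 2 * eta + 2 * T) by nra.
  apply (Rmult_lt_compat_r _ _ _ HD) in Hb.
  replace ((2 * T - alpha * eta ^ 2) / (alpha * eta ^ 2 - 2 * eta + 2 * T)
           * (alpha * eta ^ 2 - 2 * eta + 2 * T)) with (2 * T - alpha * eta ^ 2) in Hb
    by (field; lra).
  nra.
Qed.

Theorem lemma2p4 (T eta alpha beta : R) (y u u1 u2 : R -> R) :
  0 < T -> 0 < eta -> eta < T ->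
  0 < alpha -> alpha < 2 * T / eta ^ 2 ->
  0 <= beta ->
  beta < (2 * T - alpha * eta ^ 2) / (alpha * eta ^ 2 - 2 * eta + 2 * T) ->
  cont_on 0 T y -> (forall t, 0 <= t <= T -> 0 <= y t) ->
  C2_on 0 T u u1 u2 ->
  (forall t, 0 < t < T -> u2 t + y t = 0) ->
  u 0 = beta * u eta ->
  u T = alpha * RInt u 0 eta ->
  0 < gamma T eta alpha beta < 1 /\
  (forall t s, eta <= t <= T -> 0 <= s <= T ->
     gamma T eta alpha beta * Rabs (u s) <= u t).
Proof.
  intros HT He HeT Ha Ha2 Hb Hb2 _ Hy [Hd [Hu Hu1]] Heq Hbc0 HbcT.
  set (m := alpha * (beta + 1) * eta / 2).
  pose proof (beta_bound T eta alpha beta ltac:(lra) Ha Ha2 Hb2) as Hbeta; fold m in Hbeta.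
  assert (Hconc : chord_concave 0 T u).
  { apply (concave_of_derive2_nonpos 0 T u u1 u2 HT Hd); [|exact Hu].
    intros t Ht; pose proof (Hy t ltac:(lra)); pose proof (Heq t Ht); lra. }
  assert (HuT : m * u eta <= u T).
  { pose proof (trapezoid_le_RInt 0 eta u He
      (chord_concave_sub 0 T 0 eta u ltac:(lra) ltac:(lra) Hconc)
      (cont_on_sub 0 T 0 eta u ltac:(lra) ltac:(lra) Hu)) as Htrap.
    rewrite HbcT; unfold m; rewrite Hbc0 in Htrap; nra. }
  assert (Hueta : 0 <= u eta).
  { pose proof (Hconc 0 eta T ltac:(lra) He HeT ltac:(lra)).
    assert (0 <= (T - eta) * beta) by (apply Rmult_le_pos; lra); nra. }
  assert (Hu0 : 0 <= u 0) by (rewrite Hbc0; nra).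
  assert (Hm : 0 <= m) by (unfold m; assert (0 <= alpha * (beta + 1)) by nra; nra).
  assert (HmT : m * eta < T)
    by (assert (0 <= (T - eta) * beta) by (apply Rmult_le_pos; lra); lra).
  destruct (gamma_spec T eta alpha beta ltac:(lra) Ha Hb HmT)
    as [Gp [G1 [G2 G3]]]; fold m in G2, G3.
  split; [split; [exact Gp|nra]|].
  intros t s Ht Hs.
  rewrite Rabs_right
    by (apply Rle_ge, (chord_concave_ge_min 0 T u 0 0 s T Hconc); nra).
  apply (concave_min_ge u T eta m); [lra|exact Hconc|lra..].
Qed.
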